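(* Let $\mathcal{L}$ be a finite algebraic language and $\mathcal{V}$ an equational class of $\mathcal{L}$-algebras. If an $\mathcal{L}$-clause $\Sigma\Rightarrow\Delta$ is $\mathcal{V}$-admissible and $S$ is a finite complete set for $\mathsf{E}_{\mathcal{V}}(\Sigma,\mathrm{Var}(\Sigma\cup\Delta))$, then there exists $\Delta'\subseteq\Delta$ such that $|\Delta'|\le|S|$ and $\Sigma\Rightarrow\Delta'$ is $\mathcal{V}$-admissible.
   Context: An $\mathcal{L}$-clause $\Sigma\Rightarrow\Delta$ is a pair of finite sets of $\mathcal{L}$-identities. $\mathbf{Fm}_{\mathcal{L}}(Y)$ is the formula algebra over variables $Y$ ($\omega$ = all variables); $\mathrm{Var}(\Gamma)$ is the set of variables occurring in $\Gamma$; substitutions are homomorphisms of formula algebras. A substitution $\sigma\colon\mathbf{Fm}_{\mathcal{L}}(X)\to\mathbf{Fm}_{\mathcal{L}}(\omega)$ is a $\mathcal{V}$-unifier (over $X$) of $\Gamma$ with $\mathrm{Var}(\Gamma)\subseteq X$ if $\mathcal{V}\models\sigma(\varphi)\approx\sigma(\psi)$ for all $\varphi\approx\psi\in\Gamma$. $\Sigma\Rightarrow\Delta$ is $\mathcal{V}$-admissible if every substitution $\sigma\colon\mathbf{Fm}_{\mathcal{L}}(\mathrm{Var}(\Sigma\cup\Delta))\to\mathbf{Fm}_{\mathcal{L}}(\omega)$ that $\mathcal{V}$-unifies $\Sigma$ also $\mathcal{V}$-unifies some member of $\Delta$. $h_{\mathcal{V}}$ is the canonical homomorphism from $\mathbf{Fm}_{\mathcal{L}}(Y)$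 onto the free algebra $\mathbf{F}_{\mathcal{V}}(Y)$ ($h_{\mathcal{V}}(\varphi)=h_{\mathcal{V}}(\psi)$ iff $\mathcal{V}\models\varphi\approx\psi$). For substitutions over $X$, $\sigma_2\sqsubseteq_{\mathcal{V}}\sigma_1$ iff $\ker(h_{\mathcal{V}}\circ\sigma_1)\subseteq\ker(h_{\mathcal{V}}\circ\sigma_2)$. $\mathsf{E}_{\mathcal{V}}(\Sigma,X)$ is the set of $\mathcal{V}$-unifiers of $\Sigma$ over $X$ preordered by $\sqsubseteq_{\mathcal{V}}$. A complete set for a preordered set $(P,\le)$ is $M\subseteq P$ such that every $x\in P$ has some $y\in M$ with $x\le y$. *)

From mathcomp Require Import all_boot.
From Stdlib Require List.
Set Implicit Arguments. Unset Strict Implicit. Unset Printing Implicit Defensive.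

Record language := Language { sym : finType; ar : sym -> nat }.

(* Formulas (terms) of L over the variables omega = nat. *)
Inductive term (L : language) : Type :=
| Var : nat -> term L
| App : forall f : sym L, ('I_(ar f) -> term L) -> term L.
Arguments Var {L} n.
Arguments App {L} f a.

Definition identity (L : language) := (term L * term L)%type.

Fixpoint occurs (L : language) (x : nat) (t : term L) : Prop :=
  match t with
  | Var n => n = x
  | App f a => exists i, occurs x (a i)
  end.

Definition VarSet (L : language) (G : seq (identity L)) : nat -> Prop :=
  fun x => exists e, List.In e G /\ (occurs x e.1 \/ occurs x e.2).

Definition in_Fm (L : language) (X : nat -> Prop) (t : term L) : Prop :=
  forall x, occurs x t -> X x.

(* Substitutions: homomorphisms of formula algebras, determined by images of variables. *)
Definition subst (L : language) := nat -> term L.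

Fixpoint tsubst (L : language) (s : subst L) (t : term L) : term L :=
  match t with
  | Var n => s n
  | App f a => @App L f (fun i => tsubst s (a i))
  end.

Record algebra (L : language) := Algebra {
  carrier :> Type;
  op : forall f : sym L, ('I_(ar f) -> carrier) -> carrier }.

Fixpoint eval (L : language) (A : algebra L) (v : nat -> A) (t : term L) : A :=
  match t with
  | Var n => v n
  | App f a => @op L A f (fun i => eval v (a i))
  end.

Definition sat_id (L : language) (A : algebra L) (e : identity L) : Prop :=
  forall v : nat -> A, eval v e.1 = eval v e.2.

(* The equational class V = Mod(E) axiomatized by a set E of identities. *)
Definition in_class (L : language) (E : identity L -> Prop) (A : algebra L) : Prop :=
  forall e, E e -> sat_id A e.

Definition Vmodels (L : language) (E : identity L -> Prop) (e : identity L) : Prop :=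
  forall A : algebra L, in_class E A -> sat_id A e.

Definition unifies1 (L : language) (E : identity L -> Prop) (s : subst L)
  (e : identity L) : Prop := Vmodels E (tsubst s e.1, tsubst s e.2).

Definition unifies (L : language) (E : identity L -> Prop) (s : subst L)
  (G : seq (identity L)) : Prop := forall e, List.In e G -> unifies1 E s e.

Definition admissible (L : language) (E : identity L -> Prop)
  (Sigma Delta : seq (identity L)) : Prop :=
  forall s : subst L, unifies E s Sigma -> exists e, List.In e Delta /\ unifies1 E s e.

(* s2 ⊑_V s1 over X : ker(h_V o s1) ⊆ ker(h_V o s2) on Fm(X) *)
Definition sqle (L : language) (E : identity L -> Prop) (X : nat -> Prop)
  (s2 s1 : subst L) : Prop :=
  forall t u, in_Fm X t -> in_Fm X u ->
    Vmodels E (tsubst s1 t, tsubst s1 u) -> Vmodels E (tsubst s2 t, tsubst s2 u).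

Definition complete_set (L : language) (E : identity L -> Prop) (Sigma : seq (identity L))
  (X : nat -> Prop) (S : seq (subst L)) : Prop :=
  (forall t, List.In t S -> unifies E t Sigma) /\
  (forall s, unifies E s Sigma -> exists t, List.In t S /\ sqle E X s t).

(** Choose, for each unifier [t] in the complete set [S], one identity of
    [Delta] that [t] unifies; this gives [Delta'] with at most [size S]
    members. Any unifier [s] of [Sigma] lies below some [t] in [S], and
    [s ⊑ t] means [s] unifies every identity over [Var(Sigma ∪ Delta)] that
    [t] unifies, in particular the one chosen for [t]. *)

From mathcomp Require Import all_boot.
From Stdlib Require List.

Lemma choose_witnesses (A B : Type) (R : A -> B -> Prop) (S : seq A) (D : seq B) :
  (forall a, List.In a S -> exists b, List.In b D /\ R a b) ->
  exists D' : seq B,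
    (forall b, List.In b D' -> List.In b D) /\
    (size D' <= size S)%N /\
    (forall a, List.In a S -> exists b, List.In b D' /\ R a b).
Proof.
elim: S => [|a S IH] HS; first by exists [::].
have [|D' [subD' [sizeD' covD']]] := IH; first by move=> a' Ha'; apply: HS; right.
have [b [Db Rab]] := HS a (or_introl erefl).
exists (b :: D'); split; last split.
- by move=> b' [<-|Hb']; [exact: Db | exact: subD'].
- by rewrite /= ltnS.
- move=> a' [<-|Ha']; first by exists b; split=> //; left.
  by have [b' [? ?]] := covD' a' Ha'; exists b'; split=> //; right.
Qed.

Lemma in_Fm_VarSet_l (L : language) (G : seq (identity L)) (e : identity L) :
  List.In e G -> in_Fm (VarSet G) e.1.
Proof. by move=> Ge x Hx; exists e; split=> //; left. Qed.

Lemma in_Fm_VarSet_r (L : language) (G : seq (identity L)) (e : identity L) :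
  List.In e G -> in_Fm (VarSet G) e.2.
Proof. by move=> Ge x Hx; exists e; split=> //; right. Qed.

Lemma sqle_unifies1 (L : language) (E : identity L -> Prop) (G : seq (identity L))
    (s t : subst L) (e : identity L) :
  sqle E (VarSet G) s t -> List.In e G -> unifies1 E t e -> unifies1 E s e.
Proof.
move=> le_st Ge; apply: le_st; [exact: in_Fm_VarSet_l | exact: in_Fm_VarSet_r].
Qed.

Theorem proposition3p3 (L : language) (E : identity L -> Prop)
  (Sigma Delta : seq (identity L)) (S : seq (subst L)) :
  admissible E Sigma Delta ->
  complete_set E Sigma (VarSet (Sigma ++ Delta)) S ->
  exists Delta' : seq (identity L),
    (forall e, List.In e Delta' -> List.In e Delta) /\
    (size Delta' <= size S)%N /\
    admissible E Sigma Delta'.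
Proof.
move=> adm [S_unif S_complete].
have [|D' [subD' [sizeD' covD']]] := @choose_witnesses _ _ (unifies1 E) S Delta.
  by move=> t St; exact: adm (S_unif t St).
exists D'; split=> //; split=> // s s_unif.
have [t [St le_st]] := S_complete s s_unif.
have [e [D'e te]] := covD' t St.
exists e; split=> //; apply: sqle_unifies1 le_st _ te.
by apply: List.in_or_app; right; exact: subD'.
Qed.
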